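(* Let $p:\mathcal{T}_n\to[0,1]$ be any probability distribution on $\mathcal{T}_n$ that is invariant under relabelings of the leaves, and let $E$ denote expected value with respect to $p$ (for $D_n^2$, the two trees being chosen independently according to $p$). Then $$E(D_n^2)=2E(\overline\Phi^{(2)}_n)-2\cdot\frac{E(S_n)^2}{n}-4\cdot\frac{E(\Phi_n)^2}{n(n-1)}.$$
   Context: A phylogenetic tree with $n$ leaves is a fully resolved (binary) rooted tree with leaves bijectively labeled by $\{1,\dots,n\}$; $\mathcal{T}_n$ is the set of such trees. $\delta_T(i)$ is the depth (number of arcs from the root) of leaf $i$; for $i\ne j$, $\varphi_T(i,j)$ is the depth of the lowest common ancestor of leaves $i,j$; $\varphi_T(i,i)=\delta_T(i)$. $d_{\varphi,2}(T_1,T_2)=\sqrt{\sum_{1\le i\le j\le n}(\varphi_{T_1}(i,j)-\varphi_{T_2}(i,j))^2}$, and $D_n^2$ is the random variable $d_{\varphi,2}(T,T')^2$ for a random pair $(T,T')$. $S_n$, $\Phi_n$, $\overline\Phi^{(2)}_n$ are the random variables on $\mathcal{T}_n$ giving respectively the Sackin index $S(T)=\sum_{i=1}^n\delta_T(i)$, the total cophenetic index $\Phi(T)=\sum_{1\le i<j\le n}\varphi_T(i,j)$, and $\overline\Phi^{(2)}(T)=\sum_{1\le i\le j\le n}\varphi_T(i,j)^2$. *)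

From HB Require Import structures.
From mathcomp Require Import all_boot all_order all_algebra.
From mathcomp Require Import fingroup perm.
Set Implicit Arguments. Unset Strict Implicit. Unset Printing Implicit Defensive.
Import Order.TTheory GRing.Theory Num.Theory.

(* Leaves are labelled by 'I_n (i.e. {0,...,n-1} instead of {1,...,n}).
   A rooted tree with leaf set 'I_n is represented by its set of clusters:
   one cluster (set of descendant leaves) per node. *)
Definition compatible (n : nat) (A B : {set 'I_n}) : bool :=
  [|| A \subset B, B \subset A | [disjoint A & B]].

Definition is_phylo (n : nat) (T : {set {set 'I_n}}) : bool :=
  [&& [set: 'I_n] \in T,
      [forall i : 'I_n, [set i] \in T],
      set0 \notin T,
      [forall A in T, forall B in T, compatible A B] &
      [forall A in T, (1 < #|A|)%N ==>
         [exists B in T, exists C in T,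
            [&& B != set0, C != set0, [disjoint B & C] & A == B :|: C]]]].

(* phi_T(i,j) = depth of the lowest common ancestor of i and j
   = (number of clusters containing both i and j) - 1; phi_T(i,i) = delta_T(i). *)
Definition phi (n : nat) (T : {set {set 'I_n}}) (i j : 'I_n) : nat :=
  (#|[set A in T | (i \in A) && (j \in A)]|).-1.

Definition delta (n : nat) (T : {set {set 'I_n}}) (i : 'I_n) : nat := phi T i i.

Definition sackin (n : nat) (T : {set {set 'I_n}}) : nat :=
  \sum_(i : 'I_n) delta T i.
Definition cophenetic (n : nat) (T : {set {set 'I_n}}) : nat :=
  \sum_(i : 'I_n) \sum_(j : 'I_n | (i < j)%N) phi T i j.
Definition phibar2 (n : nat) (T : {set {set 'I_n}}) : nat :=
  \sum_(i : 'I_n) \sum_(j : 'I_n | (i <= j)%N) (phi T i j) ^ 2.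

Definition dphi2_sq (R : numDomainType) (n : nat) (T1 T2 : {set {set 'I_n}}) : R :=
  (\sum_(i : 'I_n) \sum_(j : 'I_n | (i <= j)%N)
     ((phi T1 i j)%:R - (phi T2 i j)%:R) ^+ 2)%R.

Definition relabel (n : nat) (s : {perm 'I_n}) (T : {set {set 'I_n}}) : {set {set 'I_n}} :=
  [set [set s x | x in A] | A : {set 'I_n} in T].

Definition invariant_distribution (R : numDomainType) (n : nat)
    (p : {set {set 'I_n}} -> R) : Prop :=
  [/\ forall T, (0 <= p T)%R,
      forall T, ~~ is_phylo T -> p T = 0%R,
      (\sum_(T : {set {set 'I_n}}) p T)%R = 1%R &
      forall (s : {perm 'I_n}) T, p (relabel s T) = p T].

Definition expect (R : numDomainType) (n : nat) (p : {set {set 'I_n}} -> R)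
    (f : {set {set 'I_n}} -> nat) : R :=
  (\sum_(T : {set {set 'I_n}}) p T * (f T)%:R)%R.

Definition expect_D2 (R : numDomainType) (n : nat) (p : {set {set 'I_n}} -> R) : R :=
  (\sum_(T1 : {set {set 'I_n}}) \sum_(T2 : {set {set 'I_n}})
     p T1 * p T2 * dphi2_sq R T1 T2)%R.

From mathcomp Require Import all_boot all_order all_algebra.
From mathcomp Require Import fingroup perm.
From mathcomp Require Import ring.
Set Implicit Arguments.
Unset Strict Implicit.
Unset Printing Implicit Defensive.
Import Order.TTheory GRing.Theory Num.Theory.
Local Open Scope ring_scope.

(* Every entry of d_{phi,2}(T,T')^2 is a squared difference of two
   independent copies of phi_T(i,j), so E(D_n^2) is twice the sum over i <= j
   of the variances of phi_T(i,j).  Relabelling invariance makes the mean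
   E(phi_T(i,j)) depend only on whether i = j, so the squared means over the
   diagonal and over the n(n-1)/2 pairs i < j are recovered from their sums,
   which are E(S_n) and E(Phi_n). *)

Lemma sum_mulr_sqr_diff (R : comPzRingType) (I : finType) (p x : I -> R) :
  \sum_i p i = 1 ->
  \sum_a \sum_b p a * p b * (x a - x b) ^+ 2 =
  2 * \sum_i p i * x i ^+ 2 - 2 * (\sum_i p i * x i) ^+ 2.
Proof.
move=> p1.
transitivity (\sum_a \sum_b
    (p a * x a ^+ 2 * p b + p a * (p b * x b ^+ 2) - 2 * (p a * x a) * (p b * x b))).
  by apply: eq_bigr => a _; apply: eq_bigr => b _; ring.
under eq_bigr do rewrite big_split /= sumrN big_split /=.
rewrite big_split /= sumrN big_split /= -!big_distrlr /= -mulr_sumr p1.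
ring.
Qed.

Lemma sum_sqr_const (R : numFieldType) (I : finType) (P : pred I) (f : I -> R) :
  {in P &, forall i j, f i = f j} ->
  \sum_(i | P i) f i ^+ 2 = (\sum_(i | P i) f i) ^+ 2 / #|P|%:R.
Proof.
move=> fconst; have [i0 Pi0 | P0] := pickP P; last first.
  by rewrite !big_pred0 // expr0n mul0r.
rewrite [LHS](eq_bigr (fun=> f i0 ^+ 2)) => [|i Pi]; last by rewrite (fconst i i0).
rewrite [in RHS](eq_bigr (fun=> f i0)) => [|i Pi]; last by rewrite (fconst i i0).
rewrite !sumr_const -mulr_natr -[f i0 *+ _]mulr_natr; field.
by rewrite pnatr_eq0 -lt0n; apply/card_gt0P; exists i0.
Qed.

Lemma card_ord_lt_pairs n : #|[pred ij : 'I_n * 'I_n | (ij.1 < ij.2)%N]| = 'C(n, 2).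
Proof.
rewrite -sum1_card (eq_bigl (fun ij : 'I_n * 'I_n => xpredT ij.1 && (ij.1 < ij.2)%N)) //.
rewrite -(pair_big_dep xpredT (fun i j : 'I_n => (i < j)%N) (fun _ _ => 1%N)) /=.
rewrite (exchange_big_dep xpredT) //= -bin2_sum big_mkord.
apply: eq_bigr => j _; transitivity (\sum_(i < j) 1)%N.
  by rewrite (big_ord_widen_cond n (fun=> true) (fun=> 1%N)) // ltnW.
by rewrite sum1_card card_ord.
Qed.

Lemma natr_bin2 (R : pzRingType) n : 'C(n, 2)%:R * 2 = n%:R * (n%:R - 1) :> R.
Proof.
case: n => [|n]; first by rewrite /= !mulr0n !mul0r.
by rewrite -[in RHS]natr1 addrK natr1 -!natrM mulnC -mul_bin_diag bin1.
Qed.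

Lemma sum_lt_pairs_sqr_const (R : numFieldType) n (f : 'I_n -> 'I_n -> R) :
  (forall i j k l : 'I_n, (i < j)%N -> (k < l)%N -> f i j = f k l) ->
  \sum_(i : 'I_n) \sum_(j : 'I_n | (i < j)%N) f i j ^+ 2 =
    (\sum_(i : 'I_n) \sum_(j : 'I_n | (i < j)%N) f i j) ^+ 2 / 'C(n, 2)%:R.
Proof.
move=> fconst; rewrite !(pair_big_dep xpredT (fun i j : 'I_n => (i < j)%N)) /=.
by rewrite -card_ord_lt_pairs; apply: sum_sqr_const => -[i j] [k l]; exact: fconst.
Qed.

Lemma sum_leq_pairs_split (V : nmodType) n (F : 'I_n -> 'I_n -> V) :
  \sum_(i : 'I_n) \sum_(j : 'I_n | (i <= j)%N) F i j =
    \sum_(i : 'I_n) F i i + \sum_(i : 'I_n) \sum_(j : 'I_n | (i < j)%N) F i j.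
Proof.
rewrite -big_split; apply: eq_bigr => i _; rewrite (bigD1 i) //=.
by congr (_ + _); apply: eq_bigl => j; rewrite ltn_neqAle andbC eq_sym.
Qed.

Section Relabel.
Variable n : nat.
Implicit Types (s : {perm 'I_n}) (T : {set {set 'I_n}}).

Lemma relabelK s : cancel (relabel s) (relabel s^-1).
Proof.
move=> T; rewrite /relabel -imset_comp -[RHS]imset_id; apply: eq_imset => A /=.
by rewrite -imset_comp -[RHS]imset_id; apply: eq_imset => x /=; rewrite permK.
Qed.

Lemma relabel_inj s : injective (relabel s).
Proof. exact: can_inj (relabelK s). Qed.

Lemma phi_relabel s T i j : phi (relabel s T) (s i) (s j) = phi T i j.
Proof.
rewrite /phi; congr _.-1.
suff -> : [set A in relabel s T | (s i \in A) && (s j \in A)] =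
    [set [set s x | x in A] | A : {set 'I_n} in [set A in T | (i \in A) && (j \in A)]].
  by rewrite card_imset //; exact: imset_inj (@perm_inj _ s).
apply/setP => B; rewrite inE; apply/andP/imsetP.
  case=> /imsetP [A AT ->]; rewrite !mem_imset; try exact: perm_inj.
  by move=> ijA; exists A; rewrite // inE AT.
case=> A; rewrite inE => /andP [AT ijA] ->; split; first exact: imset_f.
by rewrite !mem_imset //; exact: perm_inj.
Qed.

Lemma phiC T i j : phi T i j = phi T j i.
Proof.
by rewrite /phi; congr _.-1; apply: eq_card => A; rewrite !inE (andbC (i \in A)).
Qed.

End Relabel.

Section Expectation.
Variables (R : numDomainType) (n : nat) (p : {set {set 'I_n}} -> R).
Local Notation e i j := (expect p (fun T => phi T i j)).

Lemma expect_sum (I : finType) (P : pred I) (F : {set {set 'I_n}} -> I -> nat) :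
  expect p (fun T => \sum_(i | P i) F T i) = \sum_(i | P i) expect p (fun T => F T i).
Proof.
by rewrite /expect; under eq_bigr do rewrite natr_sum mulr_sumr; exact: exchange_big.
Qed.

Lemma expect_sackin : expect p (@sackin n) = \sum_i e i i.
Proof. exact: expect_sum. Qed.

Lemma expect_cophenetic :
  expect p (@cophenetic n) = \sum_(i : 'I_n) \sum_(j : 'I_n | (i < j)%N) e i j.
Proof. by rewrite /cophenetic expect_sum; under eq_bigr do rewrite expect_sum. Qed.

Lemma expect_phibar2 : expect p (@phibar2 n) =
  \sum_(i : 'I_n) \sum_(j : 'I_n | (i <= j)%N) expect p (fun T => (phi T i j ^ 2)%N).
Proof. by rewrite /phibar2 expect_sum; under eq_bigr do rewrite expect_sum. Qed.

Lemma expect_D2E : \sum_T p T = 1 ->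
  expect_D2 p = \sum_(i : 'I_n) \sum_(j : 'I_n | (i <= j)%N)
    (2 * expect p (fun T => (phi T i j ^ 2)%N) - 2 * e i j ^+ 2).
Proof.
move=> p1; rewrite /expect_D2 /dphi2_sq.
under eq_bigr do under eq_bigr do
  (rewrite mulr_sumr; under eq_bigr do rewrite mulr_sumr).
rewrite exchange_big; under eq_bigr do rewrite exchange_big.
rewrite exchange_big; apply: eq_bigr => i _.
under eq_bigr do rewrite exchange_big.
rewrite exchange_big; apply: eq_bigr => j _.
rewrite exchange_big (sum_mulr_sqr_diff (fun T => (phi T i j)%:R) p1).
by rewrite /expect; under [in RHS]eq_bigr do rewrite natrX.
Qed.

Lemma expect_phiC i j : e i j = e j i.
Proof. by apply: eq_bigr => T _; rewrite phiC. Qed.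

Section Invariance.
Hypothesis p_relabel : forall s T, p (relabel s T) = p T.

Lemma expect_phi_relabel (s : {perm 'I_n}) i j : e (s i) (s j) = e i j.
Proof.
rewrite /expect (reindex_inj (@relabel_inj n s)).
by apply: eq_bigr => T _; rewrite p_relabel phi_relabel.
Qed.

Lemma expect_phi_diag i k : e i i = e k k.
Proof. by rewrite -(expect_phi_relabel (tperm i k)) tpermL. Qed.

Lemma expect_phi_offdiag i j k l : i != j -> k != l -> e i j = e k l.
Proof.
have move_first x y z : x != z -> y != z -> e x z = e y z.
  by move=> xz yz; rewrite -(expect_phi_relabel (tperm x y)) tpermL tpermD.
move=> ij kl; have [kj | kj] := eqVneq k j.
  by subst k; rewrite (move_first i l j ij) 1?eq_sym //; apply: expect_phiC.
rewrite (move_first i k j ij kj) expect_phiC (move_first j l k) 1?eq_sym //.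
exact: expect_phiC.
Qed.

End Invariance.

End Expectation.

Theorem proposition4 (R : realFieldType) (n : nat) (p : {set {set 'I_n}} -> R) :
  invariant_distribution p ->
  expect_D2 p =
    2 * expect p (@phibar2 n)
    - 2 * (expect p (@sackin n) ^+ 2 / n%:R)
    - 4 * (expect p (@cophenetic n) ^+ 2 / (n%:R * (n%:R - 1))).
Proof.
case=> _ _ p1 p_relabel.
rewrite expect_D2E // expect_phibar2 expect_sackin expect_cophenetic.
under eq_bigr do rewrite sumrB -!mulr_sumr.
rewrite sumrB -!mulr_sumr [X in _ - 2 * X]sum_leq_pairs_split.
rewrite sum_sqr_const => [|i k _ _]; last exact: expect_phi_diag.
rewrite sum_lt_pairs_sqr_const => [|i j k l ij kl]; last first.
  by apply: expect_phi_offdiag; rewrite // neq_ltn ?ij ?kl.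
rewrite card_ord -natr_bin2 invfM.
(* Freezing the inverses keeps [field] from requiring n, 'C(n, 2) != 0: the
   identity also holds for n < 2, where these inverses are the junk 0^-1 = 0. *)
set invC := 'C(n, 2)%:R^-1; set invn := n%:R^-1.
by field.
Qed.
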